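(* Let $p$ be a prime and let $G$ be a finite $p$-group which is semi-$p$-abelian and inner semi-$p^{2}$-abelian. Then $\exp(G')\le p^{2}$, $\mho_{2}(G)\le Z(G)$, and $\mho_{1}(G)$ is abelian, i.e. $\mho_{1}(G)'=1$.
   Context: For a finite $p$-group $G$ and a positive integer $i$, $G$ is semi-$p^{i}$-abelian if for all $a,b\in G$: $(ab)^{p^{i}}=1$ if and only if $a^{p^{i}}b^{p^{i}}=1$. $G$ is inner semi-$p^{2}$-abelian if every proper subgroup of $G$ is semi-$p^{2}$-abelian but $G$ itself is not semi-$p^{2}$-abelian. $\mho_{i}(G)=\langle g^{p^{i}} : g\in G\rangle$. *)

From mathcomp Require Import all_boot all_fingroup all_solvable.
Set Implicit Arguments. Unset Strict Implicit. Unset Printing Implicit Defensive.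
Local Open Scope group_scope.

Definition semi_pi_abelian (gT : finGroupType) (p i : nat) (G : {set gT}) : Prop :=
  forall a b : gT, a \in G -> b \in G ->
    ((a * b) ^+ (p ^ i) == 1) = (a ^+ (p ^ i) * b ^+ (p ^ i) == 1).

Definition inner_semi_p2_abelian (gT : finGroupType) (p : nat) (G : {group gT}) : Prop :=
  (forall H : {group gT}, H \proper G -> semi_pi_abelian p 2 H) /\
  ~ semi_pi_abelian p 2 G.

From mathcomp Require Import all_boot all_fingroup all_solvable.
Local Open Scope group_scope.

(* Since G is a noncyclic p-group, every x in G lies in a proper normal
   subgroup M, which is semi-p^2-abelian; applied to x^-1 and x^y in M this
   gives [x, y]^(p^2) = 1 iff y centralises x^(p^2).  Hence Mho^2(G) is central
   as soon as exp(G') divides p^2, and semi-p-abelianity then makes x^p and y^p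
   commute by the same argument one level down, w = y^p having central w^p.
   For exp(G') | p^2, take a pair a, b on which G fails to be
   semi-p^2-abelian; G = <a, b>, so it suffices to find a normal subgroup K of
   exponent p^2 containing the commutator of two generators.  If some pair
   ("cex") has (ab)^(p^2) = 1 but a^(p^2) b^(p^2) <> 1, K is the set of
   p^2-torsion elements of a proper normal subgroup containing ab, and
   G = <ab, b>.  Otherwise the implication (xy)^(p^2) = 1 -> x^(p^2) y^(p^2) = 1
   holds throughout G, so the p^2-torsion of G is a subgroup, and it contains
   [a, b] because a^(p^2) = b^(-p^2) commutes with b. *)

Section SemiAbelian.

Context {gT : finGroupType}.
Implicit Types (p i n : nat) (G H K : {group gT}) (x y a b : gT).

Lemma abelian_semi_pi_abelian p i G : abelian G -> semi_pi_abelian p i G.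
Proof. by move=> abG x y Gx Gy; rewrite expgMn //; apply: (centsP abG). Qed.

Lemma not_semi_pi_abelian_witness {p i G} :
  ~ semi_pi_abelian p i G ->
  exists a b, [/\ a \in G, b \in G &
    ((a * b) ^+ (p ^ i) == 1) != (a ^+ (p ^ i) * b ^+ (p ^ i) == 1)].
Proof.
move=> notG; have /forall_inPn[a Ga /forall_inPn[b Gb neq]] :
    ~~ [forall a in G, forall b in G,
          ((a * b) ^+ (p ^ i) == 1) == (a ^+ (p ^ i) * b ^+ (p ^ i) == 1)].
  apply/negP=> /forall_inP semiG; apply: notG => a b Ga Gb.
  exact: eqP (forall_inP (semiG a Ga) b Gb).
by exists a, b.
Qed.

Lemma semi_pi_abelian_commgX {p i H x y} :
  semi_pi_abelian p i H -> x \in H -> x ^ y \in H ->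
  ([~ x, y] ^+ (p ^ i) == 1) = (x ^+ (p ^ i) ^ y == x ^+ (p ^ i)).
Proof.
move=> semiH Hx Hxy; rewrite commgEl semiH ?groupV //.
by rewrite expVgn conjXg [RHS]eq_sym eq_mulVg1.
Qed.

(* Only the forward implication is needed, applied to the pair x y, y^-1. *)
Lemma group_set_expn_eq1 {H n} :
  {in H &, forall x y, (x * y) ^+ n == 1 -> x ^+ n * y ^+ n == 1} ->
  group_set [set x in H | x ^+ n == 1].
Proof.
move=> expnM; apply/group_setP; split; first by rewrite inE group1 expg1n /=.
move=> x y /setIdP[Hx /eqP xn1] /setIdP[Hy /eqP yn1]; rewrite inE groupM //=.
have := expnM (x * y) y^-1 (groupM Hx Hy) (groupVr Hy).
by rewrite mulgK xn1 eqxx expVgn yn1 invg1 mulg1; apply.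
Qed.

Lemma norm_expn_eq1 {G H} n :
  G \subset 'N(H) -> G \subset 'N([set x in H | x ^+ n == 1]).
Proof.
move=> nHG; apply/subsetP=> g Gg; rewrite inE; apply/subsetP=> _ /imsetP[x + ->].
by rewrite !inE -conjXg conjg_eq1 memJ_norm // (subsetP nHG).
Qed.

Lemma gen_set2_mull a b : <<[set a * b; b]>> = <<[set a; b]>>.
Proof.
have [Ha Hb] : a \in <<[set a; b]>> /\ b \in <<[set a; b]>>.
  by split; rewrite mem_gen ?set21 ?set22.
have [Hab Hb'] : a * b \in <<[set a * b; b]>> /\ b \in <<[set a * b; b]>>.
  by split; rewrite mem_gen ?set21 ?set22.
apply/eqP; rewrite eqEsubset !gen_subG; apply/andP.
split; apply/subsetP=> _ /set2P[]-> //; first exact: groupM.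
by rewrite -{1}(mulgK b a) groupM ?groupV.
Qed.

Lemma der1_sub_gen2 {G K a b} :
  G :=: <<[set a; b]>> -> G \subset 'N(K) -> [~ a, b] \in K -> G^`(1) \subset K.
Proof.
move=> defG nKG Kab.
have nKab : [set a; b] \subset 'N(K).
  by apply: subset_trans nKG; rewrite defG subset_gen.
have [Na Nb] : a \in 'N(K) /\ b \in 'N(K).
  by split; apply: (subsetP nKab); rewrite ?set21 ?set22.
have cab : commute (coset K a) (coset K b).
  by apply/commgP; rewrite -morphR //= coset_id.
apply: der1_min nKG _.
rewrite defG quotient_gen // quotientU !quotient_set1 // abelian_gen.
by apply/centsP=> _ /set2P[]-> _ /set2P[]->.
Qed.

Lemma mem_normal_proper_pgroup {p G x} :
  p.-group G -> ~~ cyclic G -> x \in G ->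
  exists M : {group gT}, [/\ M <| G, M \proper G & x \in M].
Proof.
move=> pG ncycG Gx; have sxG : <[x]> \subset G by rewrite cycle_subG.
have [defG | [M maxM sxM]] := maximal_exists sxG.
  by rewrite -defG cycle_cyclic in ncycG.
exists M; split; first exact: p_maximal_normal pG maxM.
  exact: maxgroupp maxM.
by rewrite -cycle_subG.
Qed.

Lemma semi_p_abelian_Mho1_abelian p G :
  p.-group G -> semi_pi_abelian p 1 G -> 'Mho^2(G) \subset 'Z(G) ->
  abelian 'Mho^1(G).
Proof.
move=> pG semiG /subsetP ZMho2; rewrite (MhoE 1 pG) abelian_gen.
apply/centsP=> _ /imsetP[x Gx ->] _ /imsetP[y Gy ->].
set w := y ^+ (p ^ 1); have Gw : w \in G by rewrite groupX.
have /centerP[_ cGwp] : w ^+ (p ^ 1) \in 'Z(G).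
  by rewrite -expgM -expnD ZMho2 // (MhoE 2 pG) mem_gen //
     (imset_f (fun z => z ^+ (p ^ 2))).
apply/commgP/conjg_fixP/eqP; rewrite -(semi_pi_abelian_commgX semiG) ?groupJ //.
rewrite -invg_comm expVgn invg_eq1 (semi_pi_abelian_commgX semiG) ?groupJ //.
by apply/eqP/conjg_fixP/commgP/cGwp.
Qed.

End SemiAbelian.

Section InnerSemiP2Abelian.

Context {gT : finGroupType} {p : nat} {G : {group gT}}.
Hypotheses (pG : p.-group G) (innerG : inner_semi_p2_abelian p G).

Let semiM := innerG.1.

Lemma inner_semi_p2_abelian_noncyclic : ~~ cyclic G.
Proof.
apply: contra_notN innerG.2 => /cyclic_abelian; exact: abelian_semi_pi_abelian.
Qed.

Lemma inner_semi_p2_abelian_commgX x y :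
  x \in G -> y \in G ->
  ([~ x, y] ^+ (p ^ 2) == 1) = (x ^+ (p ^ 2) ^ y == x ^+ (p ^ 2)).
Proof.
move=> Gx Gy; have [M [nMG prM Mx]] :=
  mem_normal_proper_pgroup pG inner_semi_p2_abelian_noncyclic Gx.
rewrite (semi_pi_abelian_commgX (semiM _ prM)) //.
by rewrite memJ_norm ?(subsetP (normal_norm nMG)).
Qed.

Lemma inner_semi_p2_abelian_gen2 {a b} :
  a \in G -> b \in G ->
  ((a * b) ^+ (p ^ 2) == 1) != (a ^+ (p ^ 2) * b ^+ (p ^ 2) == 1) ->
  G :=: <<[set a; b]>>.
Proof.
move=> Ga Gb neq; have sHG : <<[set a; b]>> \subset G.
  by rewrite gen_subG; apply/subsetP=> _ /set2P[]->.
have [-> // | prH] := eqVproper sHG.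
by rewrite (semiM _ prH) ?mem_gen ?set21 ?set22 ?eqxx in neq.
Qed.

Lemma inner_semi_p2_abelian_der1_exponent_cex a b :
  a \in G -> b \in G -> (a * b) ^+ (p ^ 2) == 1 ->
  a ^+ (p ^ 2) * b ^+ (p ^ 2) != 1 -> exponent G^`(1) %| p ^ 2.
Proof.
move=> Ga Gb abn1 nabn1; set c := a * b; have Gc : c \in G by rewrite groupM.
have [M [nMG prM Mc]] :=
  mem_normal_proper_pgroup pG inner_semi_p2_abelian_noncyclic Gc.
have expMM : {in M &, forall x y, (x * y) ^+ (p ^ 2) == 1 ->
                                  x ^+ (p ^ 2) * y ^+ (p ^ 2) == 1}.
  by move=> x y Mx My; rewrite (semiM _ prM).
set K := Group (group_set_expn_eq1 expMM).
have nKG : G \subset 'N(K) := norm_expn_eq1 _ (normal_norm nMG).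
have Kc : c \in K by rewrite inE Mc.
have defG : G :=: <<[set c; b]>>.
  rewrite gen_set2_mull (inner_semi_p2_abelian_gen2 Ga Gb) //.
  by rewrite abn1 (negbTE nabn1).
have Kcb : [~ c, b] \in K.
  by rewrite commgEl groupM ?groupV // memJ_norm ?(subsetP nKG).
apply: dvdn_trans (exponentS (der1_sub_gen2 defG nKG Kcb)) _.
by apply/exponentP=> k /setIdP[_ /eqP].
Qed.

Lemma inner_semi_p2_abelian_der1_exponent_expM_imp :
  {in G &, forall x y,
    (x * y) ^+ (p ^ 2) == 1 -> x ^+ (p ^ 2) * y ^+ (p ^ 2) == 1} ->
  exponent G^`(1) %| p ^ 2.
Proof.
move=> expGM; have [a [b [Ga Gb neq]]] := not_semi_pi_abelian_witness innerG.2.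
have nabn1 : (a * b) ^+ (p ^ 2) != 1.
  by apply: contraNneq neq => abn1; rewrite abn1 eqxx expGM ?abn1.
have defan : a ^+ (p ^ 2) = (b ^+ (p ^ 2))^-1.
  apply/eqP; rewrite eq_mulgV1 invgK; move: neq; rewrite (negbTE nabn1).
  by case: (_ * _ == 1).
set K := Group (group_set_expn_eq1 expGM).
have nKG : G \subset 'N(K) := norm_expn_eq1 _ (normG G).
have Kab : [~ a, b] \in K.
  rewrite inE groupR //= inner_semi_p2_abelian_commgX // defan.
  by apply/eqP/conjg_fixP/commgP/commute_sym/commuteV/commuteX.
have sG'K := der1_sub_gen2 (inner_semi_p2_abelian_gen2 Ga Gb neq) nKG Kab.
apply: dvdn_trans (exponentS sG'K) _.
by apply/exponentP=> k /setIdP[_ /eqP].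
Qed.

Lemma inner_semi_p2_abelian_der1_exponent : exponent G^`(1) %| p ^ 2.
Proof.
case: (boolP [forall x in G, forall y in G,
                ((x * y) ^+ (p ^ 2) == 1) ==> (x ^+ (p ^ 2) * y ^+ (p ^ 2) == 1)]).
  move/forall_inP=> expGM; apply: inner_semi_p2_abelian_der1_exponent_expM_imp.
  by move=> x y Gx /(forall_inP (expGM x Gx))/implyP.
case/forall_inPn=> a Ga /forall_inPn[b Gb].
rewrite negb_imply => /andP[abn1 nabn1].
exact: inner_semi_p2_abelian_der1_exponent_cex Ga Gb abn1 nabn1.
Qed.

Lemma inner_semi_p2_abelian_Mho2_center : 'Mho^2(G) \subset 'Z(G).
Proof.
rewrite (MhoE 2 pG) gen_subG; apply/subsetP=> _ /imsetP[x Gx ->].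
apply/centerP; split=> [|y Gy]; first exact: groupX.
apply/commgP/conjg_fixP/eqP; rewrite -inner_semi_p2_abelian_commgX //.
by apply/eqP/(exponentP inner_semi_p2_abelian_der1_exponent); rewrite mem_commg.
Qed.

End InnerSemiP2Abelian.

Theorem lemma2p5 (gT : finGroupType) (p : nat) (G : {group gT}) :
  prime p -> p.-group G ->
  semi_pi_abelian p 1 G -> inner_semi_p2_abelian p G ->
  [/\ (exponent G^`(1) <= p ^ 2)%N,
      'Mho^2(G) \subset 'Z(G)
    & abelian 'Mho^1(G)].
Proof.
move=> pr_p pG semi1 innerG.
have ZMho2 := inner_semi_p2_abelian_Mho2_center pG innerG.
split=> //; last exact: semi_p_abelian_Mho1_abelian pG semi1 ZMho2.
by rewrite dvdn_leq ?expn_gt0 ?prime_gt0 ?inner_semi_p2_abelian_der1_exponent.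
Qed.
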